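(* $\chi(\operatorname{KG}(F_7))=3$, and $\chi(\operatorname{KG}(N))=5$ where $N$ is the non-Pappus matroid.
   Context: The matroid Kneser graph $\operatorname{KG}(M)$ has the bases of $M$ as vertices, two bases being adjacent when they are disjoint; $\chi$ is chromatic number. $F_7$ is the Fano matroid: rank $3$ on the $7$ points of the Fano plane, bases being the $3$-subsets that are not lines. The non-Pappus matroid $N$ is the rank-$3$ matroid on $\{1,\dots,9\}$ whose bases are the $3$-subsets other than the eight collinear triples $\{1,2,9\},\{4,6,7\},\{1,7,8\},\{1,4,5\},\{2,5,6\},\{6,8,9\},\{3,4,9\},\{2,3,7\}$ (the Pappus configuration with the line $\{3,5,8\}$ removed). *)

From mathcomp Require Import all_boot.
Set Implicit Arguments. Unset Strict Implicit. Unset Printing Implicit Defensive.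

(* Matroid Kneser graph KG(M): vertices = bases of M, edges = disjoint pairs.
   A matroid is given here by its set of bases on a finite ground set T. *)
Section Kneser.
Variable T : finType.
Variable bases : {set {set T}}.

Definition KG_proper_coloring (k : nat) (c : {set T} -> 'I_k) : Prop :=
  forall A B, A \in bases -> B \in bases -> [disjoint A & B] -> c A != c B.

Definition KG_colorable (k : nat) : Prop := exists c : {set T} -> 'I_k, KG_proper_coloring c.

Definition KG_chromatic_number_is (k : nat) : Prop :=
  KG_colorable k /\ forall j, KG_colorable j -> k <= j.
End Kneser.

(* Points are labelled 1..n and represented by 'I_n (label i ~ ordinal i-1). *)
Definition pt7 (i : nat) : 'I_7 := inord i.-1.
Definition pt9 (i : nat) : 'I_9 := inord i.-1.

Definition fano_lines : {set {set 'I_7}} :=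
  [set [set pt7 1; pt7 2; pt7 3]; [set pt7 1; pt7 4; pt7 5]; [set pt7 1; pt7 6; pt7 7];
       [set pt7 2; pt7 4; pt7 6]; [set pt7 2; pt7 5; pt7 7]; [set pt7 3; pt7 4; pt7 7];
       [set pt7 3; pt7 5; pt7 6]].

Definition fano_bases : {set {set 'I_7}} :=
  [set A : {set 'I_7} | (#|A| == 3) && (A \notin fano_lines)].

Definition nonpappus_lines : {set {set 'I_9}} :=
  [set [set pt9 1; pt9 2; pt9 9]; [set pt9 4; pt9 6; pt9 7]; [set pt9 1; pt9 7; pt9 8];
       [set pt9 1; pt9 4; pt9 5]; [set pt9 2; pt9 5; pt9 6]; [set pt9 6; pt9 8; pt9 9];
       [set pt9 3; pt9 4; pt9 9]; [set pt9 2; pt9 3; pt9 7]].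

Definition nonpappus_bases : {set {set 'I_9}} :=
  [set A : {set 'I_9} | (#|A| == 3) && (A \notin nonpappus_lines)].

(* Upper bounds: colour a basis by its least point, except that all bases
   avoiding the first k points share one extra colour; two of those would be
   disjoint 3-subsets of the remaining n - k < 6 points (k = 2 for F_7, k = 4
   for N).  Lower bounds: an exhaustive backtracking search shows that a
   subgraph of KG(M) has no k-colouring, namely a 7-cycle for F_7 and 43 bases
   containing a triangle for N; permuting colours, the triangle may be assumed
   to be coloured 0, 1, 2. *)
From mathcomp Require Import all_boot zify.
Set Implicit Arguments. Unset Strict Implicit. Unset Printing Implicit Defensive.

Section Backtracking.
Variable k : nat.

(* [rows] lists, for each vertex still to be coloured, its adjacency to the
   vertices coloured before it, most recent first, in the order of [pre].
   The [if] (rather than [&&]) keeps [vm_compute] from exploring the subtree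
   of an inconsistent colour. *)
Fixpoint extendable (pre : seq nat) (rows : seq (seq bool)) : bool :=
  if rows is r :: rows' then
    has (fun c => if all (fun ac => ~~ ac.1 || (ac.2 != c)) (zip r pre)
                  then extendable (c :: pre) rows' else false) (iota 0 k)
  else true.

Variables (V : eqType) (adj : rel V).

Fixpoint back_rows (seen todo : seq V) : seq (seq bool) :=
  if todo is v :: todo' then [seq adj v u | u <- seen] :: back_rows (v :: seen) todo'
  else [::].

Lemma extendable_complete (f : V -> nat) (seen todo : seq V) :
  {in todo, forall v, f v < k} ->
  {in seen ++ todo &, forall u v, adj u v -> f u != f v} ->
  extendable (map f seen) (back_rows seen todo).
Proof.
elim: todo seen => [//|v todo IH] seen fk fP /=.
apply/hasP; exists (f v); first by rewrite mem_iota fk ?mem_head.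
case: ifP => [_ | /negP[]]; last first.
  rewrite zip_map; apply/allP => _ /mapP [u useen ->] /=.
  have := fP v u; rewrite !mem_cat mem_head useen orbT => /(_ isT isT).
  by case: (adj v u) => // /(_ isT); rewrite eq_sym.
apply: (IH (v :: seen)) => [w wt|u w]; first by rewrite fk // inE wt orbT.
have reorder : v :: seen ++ todo =i seen ++ v :: todo.
  by apply: perm_mem; rewrite -cat1s perm_catCA.
by rewrite /= !reorder; apply: fP.
Qed.

Definition precoloured_colourable (clique rest : seq V) : bool :=
  extendable (rev (iota 0 (size clique))) (back_rows (rev clique) rest).

End Backtracking.

Section Relabelling.
Variables (k : nat) (s : seq nat).
Hypotheses (s_uniq : uniq s) (s_lt : {in s, forall c, c < k}).

Let palette := s ++ [seq c <- iota 0 k | c \notin s].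

Let mem_palette c : (c \in palette) = (c < k).
Proof.
rewrite mem_cat mem_filter mem_iota /=.
by case cs: (c \in s) => /=; [rewrite s_lt | ].
Qed.

Let palette_uniq : uniq palette.
Proof.
rewrite cat_uniq s_uniq filter_uniq ?iota_uniq // andbT.
by apply/hasPn => c; rewrite mem_filter => /andP [].
Qed.

Let size_palette : size palette = k.
Proof.
rewrite -[k](size_iota 0); apply: perm_size; apply: uniq_perm palette_uniq _ _.
  exact: iota_uniq.
by move=> c; rewrite mem_palette mem_iota.
Qed.

Definition relabel (c : nat) : nat := index c palette.

Lemma relabel_lt c : c < k -> relabel c < k.
Proof. by rewrite -mem_palette -index_mem size_palette. Qed.

Lemma relabel_inj : {in gtn k &, injective relabel}.
Proof.
move=> c d ck dk eq_cd.
by rewrite -(nth_index 0 (s := palette) (x := c)) ?mem_palette // -/(relabel c) eq_cd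
  nth_index ?mem_palette.
Qed.

Lemma map_relabel : map relabel s = iota 0 (size s).
Proof.
apply: (@eq_from_nth _ 0); rewrite size_map ?size_iota // => i i_lt.
rewrite (nth_map 0) // nth_iota // add0n /relabel index_cat mem_nth //.
exact: index_uniq.
Qed.

End Relabelling.

Lemma precoloured_colourable_complete (V : eqType) (adj : rel V) k
    (clique rest : seq V) (f : V -> nat) :
  {in clique ++ rest, forall v, f v < k} ->
  {in clique ++ rest &, forall u v, adj u v -> f u != f v} ->
  pairwise adj clique -> precoloured_colourable k adj clique rest.
Proof.
move=> fk fP clique_adj.
have in_clique v : v \in clique -> v \in clique ++ rest by rewrite mem_cat => ->.
have s_uniq : uniq (map f clique).
  rewrite uniq_pairwise pairwise_map.
  apply: (sub_in_pairwise (P := mem clique)) clique_adj; last exact/allP.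
  by move=> u v uc vc /=; apply: fP; apply: in_clique.
have s_lt : {in map f clique, forall c, c < k}.
  by move=> _ /mapP [v vc ->]; apply: fk (in_clique v vc).
rewrite /precoloured_colourable -(size_map f) -(map_relabel k s_uniq).
rewrite -map_comp -map_rev; apply: extendable_complete.
- by move=> v vr; apply: relabel_lt s_uniq s_lt _ (fk v _); rewrite mem_cat vr orbT.
- have mem_rev_cat w : (w \in rev clique ++ rest) = (w \in clique ++ rest).
    by rewrite !mem_cat mem_rev.
  move=> u v; rewrite !mem_rev_cat => uin vin /(fP _ _ uin vin).
  by apply: contra => /eqP /(relabel_inj s_lt) -> //; rewrite inE fk.
Qed.

Section LeastPointColouring.
Variable n : nat.

Lemma card_above (C : {set 'I_n}) k : {in C, forall x : 'I_n, k <= x} -> #|C| <= n - k.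
Proof.
move=> Ck; rewrite cardE -(size_map val) -(size_iota k (n - k)).
apply: uniq_leq_size; first by rewrite map_inj_uniq ?enum_uniq //; apply: val_inj.
move=> _ /mapP [x xC ->]; rewrite mem_iota.
rewrite mem_enum in xC; have kx := Ck x xC.
by rewrite kx subnKC ?ltn_ord //; apply: leq_trans kx (ltnW (ltn_ord x)).
Qed.

Definition least_point (A : {set 'I_n}) : nat := find (mem A) (enum 'I_n).

Lemma least_point_le (A : {set 'I_n}) (x : 'I_n) : x \in A -> least_point A <= x.
Proof.
move=> xA; rewrite leqNgt; apply/negP => /(before_find x).
by rewrite nth_ord_enum -[mem A x]/(x \in A) xA.
Qed.

Lemma least_point_mem (A : {set 'I_n}) (x0 : 'I_n) :
  least_point A < n -> nth x0 (enum 'I_n) (least_point A) \in A.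
Proof.
move=> lt_n; apply: (@nth_find _ x0 (mem A)).
by rewrite has_find size_enum_ord.
Qed.

Definition least_point_colouring k (A : {set 'I_n}) : 'I_k.+1 :=
  inord (minn k (least_point A)).

Lemma KG_colorable_least_point (bases : {set {set 'I_n}}) r k :
  {in bases, forall A : {set 'I_n}, #|A| = r} -> n - k < r + r -> KG_colorable bases k.+1.
Proof.
move=> card_r small; exists (least_point_colouring k) => A B Ab Bb AB.
apply/negP => /eqP /(congr1 val); rewrite /= !inordK ?ltnS ?geq_minl //.
have [x xA] : exists x, x \in A by apply/set0Pn; rewrite -card_gt0 card_r //; lia.
have above C : k <= least_point C -> {in C, forall y : 'I_n, k <= y}.
  by move=> kC y yC; apply: leq_trans kC (least_point_le yC).
have [kA | Ak] := leqP k (least_point A); have [kB | Bk] := leqP k (least_point B);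
  try lia.
- move=> _; suff: r + r <= n - k by rewrite leqNgt small.
  have := card_above (C := A :|: B) (k := k).
  rewrite cardsU (disjoint_setI0 AB) cards0 subn0 !card_r //; apply.
  by move=> y; rewrite inE => /orP [] y_in; [exact: (above A) | exact: (above B)].
- move=> eq_AB; have lt_n := leq_ltn_trans (least_point_le xA) (ltn_ord x).
  have := disjointFr AB (least_point_mem x lt_n).
  by rewrite eq_AB least_point_mem // -eq_AB.
Qed.

End LeastPointColouring.

Section LabelSets.
Variable n : nat.

(* A list of labels in [1, n] denotes a set of points; [x : 'I_n] has label [x + 1]. *)
Definition label_set (l : seq nat) : {set 'I_n} := [set x | (val x).+1 \in l].

Definition labels_in_range (l : seq nat) : bool := all (fun i => 0 < i <= n) l.

Definition label_pattern (l : seq nat) : seq bool := [seq i \in l | i <- iota 1 n].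

Definition disjoint_labels (l m : seq nat) : bool := ~~ has (mem m) l.

Lemma disjoint_label_set l m :
  disjoint_labels l m -> [disjoint label_set l & label_set m].
Proof.
move=> /hasPn lm; rewrite -setI_eq0; apply/eqP/setP => x; rewrite !inE.
by apply/negP => /andP [xl xm]; have := lm _ xl; rewrite /= xm.
Qed.

Lemma card_label_set l : labels_in_range l -> uniq l -> #|label_set l| = size l.
Proof.
move=> /allP range l_uniq; rewrite cardE -(size_map (fun x : 'I_n => (val x).+1)).
apply/perm_size/uniq_perm; rewrite ?l_uniq //.
  by rewrite map_inj_uniq ?enum_uniq // => x y /succn_inj /val_inj.
move=> i; apply/mapP/idP => [[x] | il]; first by rewrite mem_enum inE => xl ->.
have lt_n : i.-1 < n by have := range i il; lia.
by exists (Ordinal lt_n); rewrite ?mem_enum ?inE /= prednK //; have := range i il; lia.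
Qed.

Lemma eq_label_set l m :
  (label_set l == label_set m) = (label_pattern l == label_pattern m).
Proof.
apply/eqP/eqP => [eq_lm | /eq_in_map eq_lm].
  apply/eq_in_map => i; rewrite mem_iota => range.
  have lt_n : i.-1 < n by lia.
  have := congr1 (fun A : {set 'I_n} => Ordinal lt_n \in A) eq_lm.
  by rewrite !inE /= prednK //; lia.
apply/setP => x; rewrite !inE; apply: eq_lm.
by rewrite mem_iota add1n ltnS; apply: ltn_ord.
Qed.

Definition label_basis (line_labels : seq (seq nat)) (l : seq nat) : bool :=
  [&& labels_in_range l, uniq l, size l == 3
    & ~~ has (fun L => label_pattern l == label_pattern L) line_labels].

Lemma label_set_basis (lines : {set {set 'I_n}}) line_labels l :
  (forall A, (A \in lines) = has (fun L => A == label_set L) line_labels) ->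
  label_basis line_labels l ->
  label_set l \in [set A : {set 'I_n} | (#|A| == 3) && (A \notin lines)].
Proof.
move=> mem_lines /and4P [range l_uniq /eqP size3 not_line].
rewrite inE card_label_set // size3 mem_lines /=.
by rewrite (eq_has (a2 := fun L => label_pattern l == label_pattern L)) // => L;
  apply: eq_label_set.
Qed.

End LabelSets.

Lemma set3_inord_label_set m a b c : labels_in_range m.+1 [:: a; b; c] ->
  [set inord a.-1; inord b.-1; inord c.-1] = label_set m.+1 [:: a; b; c].
Proof.
move=> /and4P [ra rb rc _]; apply/setP => x; rewrite !inE -!val_eqE /= !inordK; lia.
Qed.

Lemma KG_colorable_gt n (bases : {set {set 'I_n}}) k (clique rest : seq (seq nat)) :
  {in clique ++ rest, forall l, label_set n l \in bases} ->
  pairwise disjoint_labels clique ->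
  ~~ precoloured_colourable k disjoint_labels clique rest ->
  forall j, KG_colorable bases j -> k < j.
Proof.
move=> in_bases clique_disj not_colourable j [c c_proper].
rewrite ltnNge; apply: contra not_colourable => le_jk.
apply: (precoloured_colourable_complete (f := fun l => val (c (label_set n l)))) => //.
  by move=> l _; apply: leq_trans (ltn_ord _) le_jk.
move=> l m l_in m_in /(disjoint_label_set n) lm.
exact: c_proper (in_bases l l_in) (in_bases m m_in) lm.
Qed.

Definition fano_line_labels : seq (seq nat) :=
  [:: [:: 1; 2; 3]; [:: 1; 4; 5]; [:: 1; 6; 7]; [:: 2; 4; 6]; [:: 2; 5; 7]; [:: 3; 4; 7];
      [:: 3; 5; 6]].

Definition nonpappus_line_labels : seq (seq nat) :=
  [:: [:: 1; 2; 9]; [:: 4; 6; 7]; [:: 1; 7; 8]; [:: 1; 4; 5]; [:: 2; 5; 6]; [:: 6; 8; 9];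
      [:: 3; 4; 9]; [:: 2; 3; 7]].

Lemma mem_fano_lines A :
  (A \in fano_lines) = has (fun L => A == label_set 7 L) fano_line_labels.
Proof. by rewrite /fano_lines /pt7 !set3_inord_label_set // !inE /= orbF -!orbA. Qed.

Lemma mem_nonpappus_lines A :
  (A \in nonpappus_lines) = has (fun L => A == label_set 9 L) nonpappus_line_labels.
Proof. by rewrite /nonpappus_lines /pt9 !set3_inord_label_set // !inE /= orbF -!orbA. Qed.

Definition fano_cycle : seq (seq nat) := [::
  [:: 1; 2; 4]; [:: 5; 6; 7]; [:: 1; 3; 4]; [:: 2; 6; 7]; [:: 3; 4; 5]; [:: 1; 2; 6];
  [:: 3; 5; 7]].

Definition nonpappus_triangle : seq (seq nat) := [::
  [:: 1; 4; 8]; [:: 2; 5; 7]; [:: 3; 6; 9]].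

Definition nonpappus_rest : seq (seq nat) := [::
  [:: 1; 4; 6]; [:: 2; 7; 8]; [:: 3; 5; 9]; [:: 1; 6; 9]; [:: 5; 7; 8]; [:: 1; 3; 6];
  [:: 2; 4; 8]; [:: 3; 5; 7]; [:: 4; 6; 9]; [:: 2; 3; 5]; [:: 1; 4; 9]; [:: 3; 5; 8];
  [:: 2; 4; 7]; [:: 3; 5; 6]; [:: 1; 4; 7]; [:: 2; 8; 9]; [:: 1; 6; 7]; [:: 2; 4; 9];
  [:: 2; 3; 8]; [:: 5; 6; 9]; [:: 1; 5; 7]; [:: 3; 7; 8]; [:: 2; 5; 9]; [:: 3; 6; 8];
  [:: 4; 5; 9]; [:: 1; 3; 7]; [:: 4; 6; 8]; [:: 2; 3; 9]; [:: 5; 8; 9]; [:: 1; 2; 6];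
  [:: 4; 5; 8]; [:: 2; 6; 7]; [:: 1; 3; 4]; [:: 6; 7; 9]; [:: 1; 2; 3]; [:: 3; 4; 6];
  [:: 7; 8; 9]; [:: 3; 4; 5]; [:: 1; 8; 9]; [:: 3; 4; 7]].

Theorem proposition4p7 :
  KG_chromatic_number_is fano_bases 3 /\ KG_chromatic_number_is nonpappus_bases 5.
Proof.
have rank3 n (lines : {set {set 'I_n}}) :
    {in [set A : {set 'I_n} | (#|A| == 3) && (A \notin lines)],
      forall A : {set 'I_n}, #|A| = 3}.
  by move=> A; rewrite inE => /andP [/eqP].
split; split.
- exact: (KG_colorable_least_point (r := 3) (rank3 _ _)).
- apply: (@KG_colorable_gt _ _ 2 [::] fano_cycle); last by vm_compute.
  + have /allP cert : all (label_basis 7 fano_line_labels) fano_cycle by vm_compute.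
    by move=> l /cert; apply: label_set_basis mem_fano_lines.
  + by [].
- exact: (KG_colorable_least_point (r := 3) (rank3 _ _)).
- apply: (@KG_colorable_gt _ _ 4 nonpappus_triangle nonpappus_rest); last by vm_compute.
  + have /allP cert : all (label_basis 9 nonpappus_line_labels)
                          (nonpappus_triangle ++ nonpappus_rest) by vm_compute.
    by move=> l /cert; apply: label_set_basis mem_nonpappus_lines.
  + by vm_compute.
Qed.
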